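(* Let $n,t,k$ be positive integers with $n>(2k-1)t$ and let $G=G_n\langle t,2t,\ldots,kt\rangle$. Let $s$ be the integer with $1\le s\le t$ and $s\equiv n\pmod t$. Then $$\theta_v(G)=s\left\lceil\frac{\lceil n/t\rceil}{k+1}\right\rceil+(t-s)\left\lceil\frac{\lfloor n/t\rfloor}{k+1}\right\rceil.$$
   Context: For integers $n\ge 2$, $k\ge 1$ and $1\le t_1<t_2<\cdots<t_k\le n-1$, the Toeplitz graph $G_n\langle t_1,\ldots,t_k\rangle$ is the simple graph with vertex set $[n]=\{1,\ldots,n\}$ in which two distinct vertices $i,j$ are adjacent if and only if $|i-j|\in\{t_1,\ldots,t_k\}$. A clique cover of a graph is a set of cliques such that every vertex lies in at least one of them; $\theta_v(G)$, the (vertex) clique cover number, is the minimum size of a clique cover of $G$. *)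

From mathcomp Require Import all_boot.
Set Implicit Arguments. Unset Strict Implicit. Unset Printing Implicit Defensive.

(* Toeplitz graph G_n<ts> on vertex set 'I_n (vertex i : 'I_n stands for i+1 in [n]):
   distinct i, j adjacent iff |i - j| is in the list ts of differences. *)
Definition toeplitz_adj (n : nat) (ts : seq nat) : rel 'I_n :=
  fun i j => (i != j) && ((if i <= j then j - i else i - j) \in ts).

Arguments toeplitz_adj n ts : clear implicits.

Definition is_clique (T : finType) (e : rel T) (C : {set T}) : bool :=
  [forall x in C, forall y in C, (x != y) ==> e x y].

Definition is_clique_cover (T : finType) (e : rel T) (P : {set {set T}}) : bool :=
  [forall C in P, is_clique e C] && [forall x, exists C in P, x \in C].

Lemma exists_clique_cover (T : finType) (e : rel T) :
  exists m, [exists P : {set {set T}}, (#|P| == m) && is_clique_cover e P].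
Proof.
exists #|[set [set x] | x : T]|; apply/existsP; exists [set [set x] | x : T].
rewrite eqxx /=; apply/andP; split.
- apply/forallP => C; apply/implyP => /imsetP [x _ ->].
  apply/forallP => a; apply/implyP; rewrite in_set1 => /eqP ->.
  apply/forallP => b; apply/implyP; rewrite in_set1 => /eqP ->.
  by rewrite eqxx.
- apply/forallP => x; apply/existsP; exists [set x].
  by rewrite imset_f // in_set1 eqxx.
Qed.

Definition clique_cover_number (T : finType) (e : rel T) : nat :=
  ex_minn (exists_clique_cover e).

Definition ceildiv (a b : nat) : nat := (a + b - 1) %/ b.

From mathcomp Require Import all_boot zify.
Set Implicit Arguments. Unset Strict Implicit. Unset Printing Implicit Defensive.

(* Write a vertex v (counted from 0) as v = q t + r with r < t and call q its level.
   Two vertices are adjacent iff they have the same residue r and their levels differ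
   by 1, ..., k.  So inside a residue class the vertices whose levels lie in a block
   [j (k+1), j (k+1) + k] form a clique, and these cliques cover the graph; the
   vertices whose level is divisible by k+1 are pairwise nonadjacent and there is one
   of them in each clique.  Hence theta_v is the number of vertices of level divisible
   by k+1, which is t * ceil(floor(n/t)/(k+1)) + (n mod t) * [k+1 | floor(n/t)]. *)

Lemma ceildivS m d : 0 < d -> ceildiv m.+1 d = (m %/ d).+1.
Proof.
by move=> d0; rewrite /ceildiv addSn subn1 /= divnDr ?dvdnn // divnn d0 addn1.
Qed.

Lemma ceildivE m d : 0 < d -> ceildiv m d = m %/ d + ~~ (d %| m).
Proof.
move=> d0; case: m => [|m].
  by rewrite /ceildiv add0n dvdn0 div0n divn_small //; lia.
by rewrite ceildivS // divnS //; case: (d %| m.+1); lia.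
Qed.

Lemma ceildivSdvd m d : 0 < d -> ceildiv m.+1 d = ceildiv m d + (d %| m).
Proof.
by move=> d0; rewrite ceildivS // ceildivE //; case: (d %| m); rewrite ?addn0 ?addn1.
Qed.

Section CliqueCover.
Variables (T : finType) (e : rel T).

Lemma is_cliqueP (C : {set T}) :
  reflect {in C &, forall x y, x != y -> e x y} (is_clique e C).
Proof.
apply: (iffP forall_inP) => [cl x y xC yC | cl x xC].
  by move/forall_inP: (cl x xC) => /(_ y yC) /implyP.
by apply/forall_inP => y yC; apply/implyP; apply: cl.
Qed.

Lemma is_clique_coverP (P : {set {set T}}) :
  reflect ({in P, forall C, is_clique e C} /\ forall x, exists2 C, C \in P & x \in C)
          (is_clique_cover e P).
Proof.
apply: (iffP andP) => [[/forall_inP cl /forallP cov] | [cl cov]].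
  by split=> // x; apply/exists_inP.
by split; [apply/forall_inP | apply/forallP => x; apply/exists_inP].
Qed.

Lemma clique_cover_number_min (P : {set {set T}}) :
  is_clique_cover e P -> clique_cover_number e <= #|P|.
Proof.
move=> cover; rewrite /clique_cover_number; case: ex_minnP => m _; apply.
by apply/existsP; exists P; rewrite eqxx.
Qed.

Lemma clique_cover_number_spec :
  exists2 P : {set {set T}}, is_clique_cover e P & #|P| = clique_cover_number e.
Proof.
rewrite /clique_cover_number; case: ex_minnP => m /existsP[P /andP[/eqP <- cover]] _.
by exists P.
Qed.

Lemma card_stable_le_clique_cover (A : {set T}) (P : {set {set T}}) :
  {in A &, forall x y, x != y -> ~~ e x y} -> is_clique_cover e P -> #|A| <= #|P|.
Proof.
move=> stable /is_clique_coverP[cl cov].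
pose g x := odflt set0 [pick C in P | x \in C].
have gP x : g x \in P /\ x \in g x.
  rewrite /g; case: pickP => [C /andP[CP xC] // | none].
  by have [C CP xC] := cov x; have := none C; rewrite CP xC.
rewrite -(card_in_imset (f := g)); last first.
  move=> x y xA yA gxy; apply/eqP; apply: contraT => xy.
  have [/cl/is_cliqueP clq xg] := gP x; have [_ yg] := gP y; rewrite -gxy in yg.
  by have := stable x y xA yA xy; rewrite (clq x y xg yg xy).
by apply/subset_leq_card/subsetP => _ /imsetP[x _ ->]; case: (gP x).
Qed.

Lemma clique_cover_number_fibres (K : eqType) (f : T -> K) (A : {set T}) :
  (forall x y, x != y -> f x = f y -> e x y) ->
  {in A &, forall x y, x != y -> ~~ e x y} ->
  (forall y, exists2 x, x \in A & f x = f y) ->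
  clique_cover_number e = #|A|.
Proof.
move=> fibre_clique stable hit; apply/eqP; rewrite eqn_leq; apply/andP; split.
  pose P := [set [set y | f y == f x] | x in A].
  apply: leq_trans (@clique_cover_number_min P _) (leq_imset_card _ _).
  apply/is_clique_coverP; split.
    move=> _ /imsetP[x _ ->]; apply/is_cliqueP => y z.
    by rewrite !inE => /eqP fy /eqP fz yz; apply: fibre_clique; rewrite // fy fz.
  move=> y; have [x xA fxy] := hit y.
  by exists [set y | f y == f x]; rewrite ?imset_f // inE fxy.
have [P cover <-] := clique_cover_number_spec.
exact: card_stable_le_clique_cover cover.
Qed.

End CliqueCover.

Lemma toeplitz_adjC n ts : symmetric (toeplitz_adj n ts).
Proof.
move=> u w; rewrite /toeplitz_adj eq_sym; case: ltngtP => // uw.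
by rewrite (val_inj uw) eqxx.
Qed.

Lemma toeplitz_adj_ltn n ts (u w : 'I_n) : u < w -> toeplitz_adj n ts u w = (w - u \in ts).
Proof. by move=> uw; rewrite /toeplitz_adj ltnW // neq_ltn uw. Qed.

Lemma multiplesP t k d :
  reflect (exists2 i, 0 < i <= k & d = i * t) (d \in [seq i * t | i <- iota 1 k]).
Proof.
apply: (iffP mapP) => [[i] | [i ik ->]]; last by exists i; rewrite // mem_iota; lia.
by rewrite mem_iota => ik ->; exists i => //; lia.
Qed.

Lemma subn_ltn_eq_div m n d : 0 < d -> m %/ d = n %/ d -> n - m < d.
Proof. by move=> d0 eq_div; rewrite (divn_eq n d) (divn_eq m d) eq_div; have := ltn_mod n d; lia. Qed.

Lemma same_residue_block_sub t k u w : 0 < t -> u < w ->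
  u %% t = w %% t -> u %/ t %/ k.+1 = w %/ t %/ k.+1 ->
  exists2 i, 0 < i <= k & w - u = i * t.
Proof.
move=> t0 uw eq_mod eq_block.
have sub_levels : w - u = (w %/ t - u %/ t) * t.
  by rewrite mulnBl {1}(divn_eq w t) {1}(divn_eq u t) eq_mod; lia.
exists (w %/ t - u %/ t) => //; apply/andP; split.
  by rewrite subn_gt0 -(ltn_pmul2r t0); lia.
by rewrite -ltnS subn_ltn_eq_div.
Qed.

Lemma dvdn_level_addl t k u i : 0 < t -> 0 < i <= k ->
  k.+1 %| u %/ t -> ~~ (k.+1 %| (u + i * t) %/ t).
Proof.
move=> t0 /andP[i0 ik] du; rewrite divnDMl // dvdn_addr //.
by apply: contraTN ik => /(dvdn_leq i0); lia.
Qed.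

Lemma clique_cover_number_toeplitz_multiples n t k : 0 < t ->
  clique_cover_number (toeplitz_adj n [seq i * t | i <- iota 1 k]) =
  #|[set v : 'I_n | k.+1 %| v %/ t]|.
Proof.
set e := toeplitz_adj n _ => t0.
apply: (@clique_cover_number_fibres _ e _ (fun v : 'I_n => (v %% t, v %/ t %/ k.+1))).
- move=> u w; wlog uw : u w / u < w => [ltn_case u_neq_w eq_key | _ [eq_mod eq_block]].
    case: (ltngtP u w) => [uw | wu | /val_inj u_eq_w]; first exact: ltn_case.
      by rewrite /e toeplitz_adjC; apply: ltn_case wu _ (esym eq_key); rewrite eq_sym.
    by rewrite u_eq_w eqxx in u_neq_w.
  by rewrite /e toeplitz_adj_ltn //; apply/multiplesP; apply: same_residue_block_sub.
- move=> u w; wlog uw : u w / u < w => [ltn_case uA wA u_neq_w | ].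
    case: (ltngtP u w) => [uw | wu | /val_inj u_eq_w]; first exact: ltn_case.
      by rewrite /e toeplitz_adjC; apply: ltn_case wu wA uA _; rewrite eq_sym.
    by rewrite u_eq_w eqxx in u_neq_w.
  rewrite !inE => du dw _; rewrite /e toeplitz_adj_ltn //; apply/multiplesP => -[i ik sub_uw].
  by have := dvdn_level_addl t0 ik du; rewrite -sub_uw subnKC ?(ltnW uw) // dw.
(* the vertex of y's residue class on the first level of y's block *)
move=> y; set x := y %% t + y %/ t %/ k.+1 * k.+1 * t.
have div_x : x %/ t = y %/ t %/ k.+1 * k.+1 by rewrite divnDMl // divn_small ?ltn_mod.
have mod_x : x %% t = y %% t by rewrite /x addnC modnMDl modn_mod.
have x_le_y : x <= y.
  by rewrite /x {3}(divn_eq y t) addnC leq_add2r leq_mul2r leq_divM orbT.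
exists (Ordinal (leq_ltn_trans x_le_y (ltn_ord y))); first by rewrite inE /= div_x dvdn_mull.
by rewrite /= mod_x div_x mulnK.
Qed.

Lemma sum_dvdn_level t k N : 0 < t ->
  \sum_(v < N) (k.+1 %| v %/ t) = t * ceildiv (N %/ t) k.+1 + N %% t * (k.+1 %| N %/ t).
Proof.
move=> t0; elim: N => [|N IH].
  by rewrite big_ord0 div0n mod0n /ceildiv add0n divn_small ?muln0 //; lia.
rewrite big_ord_recr /= IH divnS // modnS.
case tN: (t %| N.+1); last by rewrite add0n mulSn; lia.
have Nt : N %% t = t.-1.
  have : t %| (N %% t).+1.
    by rewrite -(dvdn_addr _ (dvdn_mull (N %/ t) (dvdnn t))) addnS -divn_eq.
  move/(dvdn_leq (ltn0Sn _)); have := ltn_mod N t; rewrite t0; lia.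
rewrite add1n ceildivSdvd // Nt mul0n addn0 mulnDr; case: (k.+1 %| N %/ t); lia.
Qed.

Lemma card_dvdn_level n t k : 0 < t ->
  #|[set v : 'I_n | k.+1 %| v %/ t]| = t * ceildiv (n %/ t) k.+1 + n %% t * (k.+1 %| n %/ t).
Proof.
move=> t0; rewrite -sum_dvdn_level // -sum1dep_card big_mkcond.
by apply: eq_bigr => v _; case: ifP.
Qed.

Lemma ceildiv_residue_split n t k s : 0 < t -> 1 <= s <= t -> s = n %[mod t] ->
  s * ceildiv (ceildiv n t) k.+1 + (t - s) * ceildiv (n %/ t) k.+1 =
  t * ceildiv (n %/ t) k.+1 + n %% t * (k.+1 %| n %/ t).
Proof.
move=> t0 /andP[s1 st] s_mod; rewrite (@ceildivE n t t0).
case: (ltnP s t) => [s_lt_t | t_le_s].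
  have n_mod : n %% t = s by rewrite -s_mod modn_small.
  have -> : ~~ (t %| n) by rewrite /dvdn n_mod -lt0n.
  by rewrite addn1 ceildivSdvd // mulnDr addnAC -mulnDl subnKC // n_mod.
have t_eq_s : s = t by lia.
have n_mod : n %% t = 0 by rewrite -s_mod t_eq_s modnn.
have t_dvd_n : t %| n by rewrite /dvdn n_mod.
by rewrite t_dvd_n n_mod t_eq_s addn0 subnn.
Qed.

Theorem theorem2p10 (n t k : nat) :
  0 < n -> 0 < t -> 0 < k -> (2 * k - 1) * t < n ->
  forall s : nat, 1 <= s <= t -> s = n %[mod t] ->
  clique_cover_number (toeplitz_adj n [seq i * t | i <- iota 1 k]) =
    s * ceildiv (ceildiv n t) k.+1 + (t - s) * ceildiv (n %/ t) k.+1.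
Proof.
move=> _ t0 _ _ s s_range s_mod.
rewrite clique_cover_number_toeplitz_multiples // card_dvdn_level //.
by rewrite (ceildiv_residue_split k t0 s_range s_mod).
Qed.
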